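(* Let $s_0,t_0\ge 1$ be real numbers and let $\mathcal T$ be the infinite rooted tree of nodes generated from $(s_0,t_0)$ by the recursive rule described in the context. Then the set of accumulation points in $\mathbb R^2$ of the set of locations of the nodes of $\mathcal T$ is exactly the closed segment with extremities $(-1,s_0)$ and $(1,t_0)$, i.e. the set $\{(x,\,\tfrac{s_0+t_0}{2}+\tfrac{t_0-s_0}{2}x): x\in[-1,1]\}$.
   Context: Points of $\mathbb R^2$ are written $(x,y)$ (abscissa = space, ordinate = time). Given real numbers $s_0,t_0\ge 1$, a tree $\mathcal T$ is built recursively. Each node has a location $(x,y)\in\mathbb R^2$, a depth $d\in\mathbb N$ (the number of its ancestors that are split nodes), and a pair of real parameters $(s,t)$. The root is at $(0,0)$, has depth $0$ and parameters $(s_0,t_0)$. A node at $(x,y)$ of depth $d$ with parameters $(s,t)$ is: - a delay node if $s\ge 2$ and $t\ge 2$; it then has exactly one child, located at $(x,\,y+2^{-d})$, of depth $d$, with parameters $(s-1,\,t-1)$; - a split node otherwise (i.e. if $s<2$ or $t<2$); it then has exactly two children, both of depth $d+1$: a left child at $(x-2^{-(d+1)},\,y+2^{-(d+1)})$ with parameters $(2s-1,\,s+t-1)$, and a right child at $(x+2^{-(d+1)},\,y+2^{-(d+1)})$ with parameters $(s+t-1,\,2t-1)$. The recursion never stops, so $\mathcal T$ is infinite; each node is joined to its children by straight edges. *)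

From Stdlib Require Import Reals Lra.
Open Scope R_scope.

(* A node of the tree: location (nx, ny), depth nd, parameters (ns, nt). *)
Record node := mknode { nx : R; ny : R; nd : nat; ns : R; nt : R }.

Inductive in_tree (s0 t0 : R) : node -> Prop :=
| tree_root : in_tree s0 t0 (mknode 0 0 0 s0 t0)
| tree_delay : forall x y d s t,
    in_tree s0 t0 (mknode x y d s t) ->
    2 <= s -> 2 <= t ->
    in_tree s0 t0 (mknode x (y + / 2 ^ d) d (s - 1) (t - 1))
| tree_left : forall x y d s t,
    in_tree s0 t0 (mknode x y d s t) ->
    (s < 2 \/ t < 2) ->
    in_tree s0 t0 (mknode (x - / 2 ^ (S d)) (y + / 2 ^ (S d)) (S d)
                          (2 * s - 1) (s + t - 1))
| tree_right : forall x y d s t,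
    in_tree s0 t0 (mknode x y d s t) ->
    (s < 2 \/ t < 2) ->
    in_tree s0 t0 (mknode (x + / 2 ^ (S d)) (y + / 2 ^ (S d)) (S d)
                          (s + t - 1) (2 * t - 1)).

Definition locations (s0 t0 : R) (p : R * R) : Prop :=
  exists n, in_tree s0 t0 n /\ p = (nx n, ny n).

Definition dist2 (p q : R * R) : R :=
  sqrt ((fst p - fst q) ^ 2 + (snd p - snd q) ^ 2).

Definition accumulation_point (A : R * R -> Prop) (p : R * R) : Prop :=
  forall eps, 0 < eps -> exists q, A q /\ q <> p /\ dist2 p q < eps.

Definition segment (s0 t0 : R) (p : R * R) : Prop :=
  exists x, -1 <= x <= 1 /\ p = (x, (s0 + t0) / 2 + (t0 - s0) / 2 * x).

From Stdlib Require Import Reals Lra Lia Classical.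
Open Scope R_scope.

(* Every node (x, y) of depth d with parameters (s, t) satisfies the invariant
   s - t = s0 - t0, 1 <= s, t <= 2 (s0 + t0) + 3 (splits happen only when
   min (s, t) < 2), |x| <= 1 - 2^-d, (x, y) lies on the dyadic grid of mesh
   2^-d, and, crucially, the node sits exactly (s + t)/2 * 2^-d below the line
   through (-1, s0) and (1, t0).
   Hence all nodes lie strictly below the segment, at a distance O(2^-d).  An
   accumulation point is approached by nodes off any fixed grid, i.e. by nodes
   of arbitrarily large depth, so it lies on the segment.  Conversely delays
   cannot go on forever (s drops by 1 each time), so at every depth d the
   splits can be steered towards any abscissa in [-1, 1] up to 2^-d, giving
   nodes, never on the segment itself, converging to each of its points. *)

Lemma Rabs_le_inv x r : Rabs x <= r -> - r <= x <= r.
Proof. unfold Rabs. destruct Rcase_abs; lra. Qed.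

Definition segment_line (s0 t0 x : R) : R := (s0 + t0) / 2 + (t0 - s0) / 2 * x.

Lemma segment_line_close s0 t0 u v r : Rabs (u - v) <= r ->
  Rabs (segment_line s0 t0 u - segment_line s0 t0 v) <= Rabs (t0 - s0) * r.
Proof.
  intros h.
  replace (segment_line s0 t0 u - segment_line s0 t0 v) with ((t0 - s0) / 2 * (u - v))
    by (unfold segment_line; ring).
  rewrite Rabs_mult.
  assert (Rabs ((t0 - s0) / 2) <= Rabs (t0 - s0))
    by (unfold Rabs; do 2 destruct Rcase_abs; lra).
  assert (0 <= Rabs ((t0 - s0) / 2)) by apply Rabs_pos.
  assert (0 <= Rabs (u - v)) by apply Rabs_pos.
  nra.
Qed.

Lemma pow2_pos d : 0 < 2 ^ d.
Proof. apply pow_lt; lra. Qed.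

Lemma pow2_inv_pos d : 0 < / 2 ^ d.
Proof. apply Rinv_0_lt_compat, pow2_pos. Qed.

Lemma pow2_inv_S d : / 2 ^ S d = / 2 ^ d / 2.
Proof. simpl. field. apply Rgt_not_eq, pow2_pos. Qed.

Lemma pow2_inv_le d D : (d <= D)%nat -> / 2 ^ D <= / 2 ^ d.
Proof.
  intros h. apply Rinv_le_contravar; [apply pow2_pos|]. apply Rle_pow; [lra | exact h].
Qed.

Lemma exists_mul_pow2_inv_lt C eps : 0 < C -> 0 < eps -> exists D, C * / 2 ^ D < eps.
Proof.
  intros hC heps.
  destruct (pow_lt_1_zero (/ 2) ltac:(rewrite Rabs_right; lra) (eps / C)) as [D HD];
    [apply Rdiv_lt_0_compat; assumption |].
  exists D. specialize (HD D (le_n D)).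
  rewrite pow_inv, Rabs_right in HD by (left; apply pow2_inv_pos).
  apply (Rmult_lt_compat_l C) in HD; [| exact hC].
  replace (C * (eps / C)) with eps in HD by (field; lra). exact HD.
Qed.

Definition dyadic (d : nat) (x : R) : Prop := exists k : Z, x * 2 ^ d = IZR k.

Definition on_grid (d : nat) (q : R * R) : Prop := dyadic d (fst q) /\ dyadic d (snd q).

Lemma dyadic_add d x y : dyadic d x -> dyadic d y -> dyadic d (x + y).
Proof.
  intros [k hk] [m hm]. exists (k + m)%Z. rewrite plus_IZR, <- hk, <- hm. ring.
Qed.

Lemma dyadic_opp d x : dyadic d x -> dyadic d (- x).
Proof. intros [k hk]. exists (- k)%Z. rewrite opp_IZR, <- hk. ring. Qed.

Lemma dyadic_pow2_inv d : dyadic d (/ 2 ^ d).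
Proof. exists 1%Z. apply Rinv_l, Rgt_not_eq, pow2_pos. Qed.

Lemma dyadic_le d D x : (d <= D)%nat -> dyadic d x -> dyadic D x.
Proof.
  intros hdD [k hk]. exists (k * 2 ^ Z.of_nat (D - d))%Z.
  replace D with (d + (D - d))%nat at 1 by lia.
  rewrite pow_add, mult_IZR, <- hk, <- pow_IZR. ring.
Qed.

Lemma dyadic_close_eq D x y : dyadic D x -> dyadic D y -> Rabs (x - y) < / 2 ^ D -> x = y.
Proof.
  intros [k hk] [m hm] hxy.
  assert (hP := pow2_pos D).
  assert (hbound : Rabs (IZR (k - m)) < 1).
  { rewrite minus_IZR, <- hk, <- hm, <- Rmult_minus_distr_r, Rabs_mult, (Rabs_right (2 ^ D)) by lra.
    apply (Rmult_lt_compat_r (2 ^ D)) in hxy; [|exact hP].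
    rewrite Rinv_l in hxy by lra. exact hxy. }
  assert (k = m).
  { apply Rabs_def2 in hbound. destruct hbound as [h1 h2].
    assert (-1 < k - m)%Z by (apply lt_IZR; simpl; lra).
    assert (k - m < 1)%Z by (apply lt_IZR; simpl; lra).
    lia. }
  subst m. apply (Rmult_eq_reg_r (2 ^ D)); lra.
Qed.

Lemma dist2_ge_coord p q :
  Rabs (fst p - fst q) <= dist2 p q /\ Rabs (snd p - snd q) <= dist2 p q.
Proof.
  destruct p as [a b], q as [c d]; unfold dist2; cbn [fst snd].
  rewrite <- !sqrt_Rsqr_abs. unfold Rsqr.
  assert (0 <= (a - c) * (a - c)) by apply Rle_0_sqr.
  assert (0 <= (b - d) * (b - d)) by apply Rle_0_sqr.
  split; apply sqrt_le_1_alt; lra.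
Qed.

Lemma dist2_le_abs_sum p q : dist2 p q <= Rabs (fst p - fst q) + Rabs (snd p - snd q).
Proof.
  destruct p as [a b], q as [c d]; unfold dist2; cbn [fst snd].
  assert (ha := Rabs_pos (a - c)). assert (hb := Rabs_pos (b - d)).
  rewrite <- (sqrt_pow2 (Rabs (a - c) + Rabs (b - d))) by lra.
  apply sqrt_le_1_alt.
  rewrite <- (pow2_abs (a - c)), <- (pow2_abs (b - d)). nra.
Qed.

Lemma dist2_pos p q : p <> q -> 0 < dist2 p q.
Proof.
  intros hpq. destruct (dist2_ge_coord p q) as [hx hy].
  destruct (Req_dec (fst p) (fst q)) as [ex | nx].
  - destruct (Req_dec (snd p) (snd q)) as [ey | ny].
    + destruct p, q; simpl in *; subst; contradiction.
    + assert (0 < Rabs (snd p - snd q)) by (apply Rabs_pos_lt; lra). lra.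
  - assert (0 < Rabs (fst p - fst q)) by (apply Rabs_pos_lt; lra). lra.
Qed.

Lemma on_grid_close_eq D q q' : on_grid D q -> on_grid D q' ->
  Rabs (fst q - fst q') < / 2 ^ D -> Rabs (snd q - snd q') < / 2 ^ D -> q = q'.
Proof.
  intros [hx hy] [hx' hy'] hdx hdy.
  destruct q, q'; simpl in *. f_equal; eapply dyadic_close_eq; eauto.
Qed.

Lemma accumulation_point_off_grid A p D eps : accumulation_point A p -> 0 < eps ->
  exists q, A q /\ dist2 p q < eps /\ ~ on_grid D q.
Proof.
  intros hacc heps.
  set (r := Rmin eps (/ 2 ^ D / 2)).
  assert (hr : 0 < r) by (apply Rmin_glb_lt; [lra | assert (h := pow2_inv_pos D); lra]).
  assert (hr_eps : r <= eps) by apply Rmin_l.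
  assert (hr_grid : r <= / 2 ^ D / 2) by apply Rmin_r.
  destruct (hacc r hr) as (q1 & hq1 & hne1 & hd1).
  destruct (classic (on_grid D q1)) as [hg1 | hg1]; [| exists q1; repeat split; auto; lra].
  (* A second approximant strictly closer than q1 is a different point; two grid
     points that close to p would coincide, so one of them is off the grid. *)
  assert (hd1pos := dist2_pos _ _ (not_eq_sym hne1)).
  destruct (hacc (Rmin r (dist2 p q1))) as (q2 & hq2 & hne2 & hd2);
    [apply Rmin_glb_lt; lra |].
  assert (hd2r : dist2 p q2 < r) by (eapply Rlt_le_trans; [exact hd2 | apply Rmin_l]).
  destruct (classic (on_grid D q2)) as [hg2 | hg2]; [| exists q2; repeat split; auto; lra].
  exfalso.
  destruct (dist2_ge_coord p q1) as [hx1 hy1], (dist2_ge_coord p q2) as [hx2 hy2].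
  assert (hclose : forall u v w, Rabs (v - u) < r -> Rabs (v - w) < r -> Rabs (u - w) < / 2 ^ D)
    by (intros u v w; unfold Rabs; repeat destruct Rcase_abs; lra).
  assert (q1 = q2) as <-.
  { apply (on_grid_close_eq D); auto;
      [apply (hclose _ (fst p)) | apply (hclose _ (snd p))]; lra. }
  assert (dist2 p q1 < dist2 p q1) by (eapply Rlt_le_trans; [exact hd2 | apply Rmin_r]).
  lra.
Qed.

Record node_invariant (s0 t0 : R) (n : node) : Prop := {
  inv_diff : ns n - nt n = s0 - t0;
  inv_s_ge1 : 1 <= ns n;
  inv_t_ge1 : 1 <= nt n;
  inv_s_le : ns n <= 2 * (s0 + t0) + 3;
  inv_t_le : nt n <= 2 * (s0 + t0) + 3;
  inv_x_range : -1 + / 2 ^ nd n <= nx n <= 1 - / 2 ^ nd n;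
  inv_height : ny n + (ns n + nt n) / 2 * / 2 ^ nd n = segment_line s0 t0 (nx n);
  inv_x_dyadic : dyadic (nd n) (nx n);
  inv_y_dyadic : dyadic (nd n) (ny n)
}.

Section Tree.

Variables s0 t0 : R.
Hypothesis hs0 : 1 <= s0.
Hypothesis ht0 : 1 <= t0.

Lemma in_tree_invariant n : in_tree s0 t0 n -> node_invariant s0 t0 n.
Proof.
  intros H.
  induction H as [| x y d s t H [] hs ht | x y d s t H [] hsplit | x y d s t H [] hsplit];
    cbn [nx ny nd ns nt] in *.
  - constructor; cbn [nx ny nd ns nt pow]; rewrite ?Rinv_1; try lra.
    + unfold segment_line; lra.
    + exists 0%Z; lra.
    + exists 0%Z; lra.
  - constructor; cbn [nx ny nd ns nt]; try lra; try assumption.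
    apply dyadic_add; [assumption | apply dyadic_pow2_inv].
  - assert (hw := pow2_inv_pos d).
    constructor; cbn [nx ny nd ns nt]; try (rewrite ?pow2_inv_S; lra).
    + rewrite pow2_inv_S. unfold segment_line in *. nra.
    + apply dyadic_add; [apply (dyadic_le d); auto | apply dyadic_opp, dyadic_pow2_inv].
    + apply dyadic_add; [apply (dyadic_le d); auto | apply dyadic_pow2_inv].
  - assert (hw := pow2_inv_pos d).
    constructor; cbn [nx ny nd ns nt]; try (rewrite ?pow2_inv_S; lra).
    + rewrite pow2_inv_S. unfold segment_line in *. nra.
    + apply dyadic_add; [apply (dyadic_le d); auto | apply dyadic_pow2_inv].
    + apply dyadic_add; [apply (dyadic_le d); auto | apply dyadic_pow2_inv].
Qed.

Lemma in_tree_x_bound n : in_tree s0 t0 n -> -1 <= nx n <= 1.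
Proof.
  intros hn. destruct (in_tree_invariant n hn).
  assert (hw := pow2_inv_pos (nd n)). lra.
Qed.

Lemma in_tree_line_gap n : in_tree s0 t0 n ->
  0 < segment_line s0 t0 (nx n) - ny n <= (2 * (s0 + t0) + 3) * / 2 ^ nd n.
Proof.
  intros hn. destruct (in_tree_invariant n hn).
  assert (hw := pow2_inv_pos (nd n)). nra.
Qed.

Lemma in_tree_on_grid n D : in_tree s0 t0 n -> (nd n <= D)%nat -> on_grid D (nx n, ny n).
Proof.
  intros hn hD. destruct (in_tree_invariant n hn).
  split; apply (dyadic_le (nd n)); assumption.
Qed.

Lemma in_tree_split_reachable n : in_tree s0 t0 n ->
  exists m, in_tree s0 t0 m /\ nx m = nx n /\ nd m = nd n /\ (ns m < 2 \/ nt m < 2).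
Proof.
  intros hn. destruct (INR_unbounded (ns n)) as [k hk].
  revert n hn hk. induction k as [| k IH]; intros [x y d s t] hn hk; cbn [nx nd ns] in *.
  - destruct (in_tree_invariant _ hn). cbn in *. lra.
  - destruct (Rlt_or_le s 2) as [hs | hs]; [exists (mknode x y d s t); auto |].
    destruct (Rlt_or_le t 2) as [ht | ht]; [exists (mknode x y d s t); auto |].
    apply (IH (mknode x (y + / 2 ^ d) d (s - 1) (t - 1))).
    + now constructor.
    + rewrite S_INR in hk. cbn. lra.
Qed.

Lemma in_tree_node_near_abscissa a D : -1 <= a <= 1 ->
  exists n, in_tree s0 t0 n /\ nd n = D /\ Rabs (nx n - a) <= / 2 ^ D.
Proof.
  intros ha. induction D as [| D IH].
  - exists (mknode 0 0 0 s0 t0). split; [constructor |]. cbn.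
    split; [reflexivity |]. rewrite Rinv_1. apply Rabs_le. lra.
  - destruct IH as (n & hn & hd & hnear).
    destruct (in_tree_split_reachable n hn) as ([x y d s t] & hm & hx & hdm & hsplit).
    cbn [nx nd ns nt] in *. rewrite hdm, hd in hm. rewrite <- hx in hnear.
    apply Rabs_le_inv in hnear. assert (hw := pow2_inv_pos D).
    destruct (Rle_or_lt a x).
    + eexists. split; [apply tree_left; eassumption |].
      cbn [nx nd]. rewrite pow2_inv_S. split; [reflexivity |]. apply Rabs_le. lra.
    + eexists. split; [apply tree_right; eassumption |].
      cbn [nx nd]. rewrite pow2_inv_S. split; [reflexivity |]. apply Rabs_le. lra.
Qed.

Lemma accumulation_point_deep_node p D eps :
  accumulation_point (locations s0 t0) p -> 0 < eps ->
  exists n, in_tree s0 t0 n /\ (D < nd n)%nat /\ dist2 p (nx n, ny n) < eps.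
Proof.
  intros hacc heps.
  destruct (accumulation_point_off_grid _ p D eps hacc heps) as (q & (n & hn & ->) & hd & hoff).
  exists n. split; [exact hn |]. split; [| exact hd].
  destruct (Nat.le_gt_cases (nd n) D) as [hle | hgt]; [| exact hgt].
  exfalso. exact (hoff (in_tree_on_grid n D hn hle)).
Qed.

Lemma accumulation_point_near_line_node p eps :
  accumulation_point (locations s0 t0) p -> 0 < eps ->
  exists n, in_tree s0 t0 n /\ Rabs (fst p - nx n) < eps /\ Rabs (snd p - ny n) < eps /\
    segment_line s0 t0 (nx n) - ny n < eps.
Proof.
  intros hacc heps.
  set (M := 2 * (s0 + t0) + 3).
  destruct (exists_mul_pow2_inv_lt M eps) as [D hD]; [unfold M; lra | exact heps |].
  destruct (accumulation_point_deep_node p D eps hacc heps) as (n & hn & hdeep & hd).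
  destruct (dist2_ge_coord p (nx n, ny n)) as [hx hy]. cbn [fst snd] in hx, hy.
  exists n. split; [exact hn |]. repeat split; try lra.
  destruct (in_tree_line_gap n hn) as [_ hgap].
  assert (/ 2 ^ nd n <= / 2 ^ D) by (apply pow2_inv_le; lia).
  assert (M * / 2 ^ nd n <= M * / 2 ^ D) by (apply Rmult_le_compat_l; [unfold M |]; lra).
  unfold M in *. lra.
Qed.

Lemma accumulation_point_in_segment p :
  accumulation_point (locations s0 t0) p -> segment s0 t0 p.
Proof.
  intros hacc. destruct p as [a b].
  set (K := Rabs (t0 - s0)). assert (hK : 0 <= K) by apply Rabs_pos.
  assert (happrox : forall eps, 0 < eps ->
    -1 - eps <= a <= 1 + eps /\ Rabs (b - segment_line s0 t0 a) <= (2 + K) * eps).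
  { intros eps heps.
    destruct (accumulation_point_near_line_node (a, b) eps hacc heps)
      as (n & hn & hx & hy & hgap); cbn [fst snd] in hx, hy.
    destruct (in_tree_line_gap n hn) as [hpos _].
    assert (hline := segment_line_close s0 t0 (nx n) a eps
      ltac:(rewrite Rabs_minus_sym; lra)).
    apply Rabs_def2 in hx, hy. apply Rabs_le_inv in hline.
    pose proof (in_tree_x_bound n hn).
    split; [lra |]. apply Rabs_le. fold K in hline. lra. }
  exists a. split.
  - split; apply Rle_plus_epsilon; intros eps heps; destruct (happrox eps heps); lra.
  - assert (hb : forall eps, 0 < eps -> Rabs (b - segment_line s0 t0 a) <= eps).
    { intros eps heps.
      destruct (happrox (eps / (2 + K))) as [_ h]; [apply Rdiv_lt_0_compat; lra |].
      replace ((2 + K) * (eps / (2 + K))) with eps in h by (field; lra). exact h. }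
    f_equal. fold (segment_line s0 t0 a).
    apply Rle_antisym; apply Rle_plus_epsilon; intros eps heps;
      destruct (Rabs_le_inv _ _ (hb eps heps)); lra.
Qed.

Lemma segment_in_accumulation_point p :
  segment s0 t0 p -> accumulation_point (locations s0 t0) p.
Proof.
  intros (a & ha & ->) eps heps.
  set (C := 1 + Rabs (t0 - s0) + (2 * (s0 + t0) + 3)).
  assert (hC : 0 < C) by (unfold C; pose proof (Rabs_pos (t0 - s0)); lra).
  destruct (exists_mul_pow2_inv_lt C eps hC heps) as [D hsmall].
  destruct (in_tree_node_near_abscissa a D ha) as (n & hn & <- & hx).
  destruct (in_tree_line_gap n hn) as [hpos hgap].
  assert (hline := segment_line_close s0 t0 a (nx n) _ ltac:(rewrite Rabs_minus_sym; exact hx)).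
  exists (nx n, ny n). split; [exists n; auto |]. split.
  - intros [= hxa hya]. rewrite hxa in hpos. unfold segment_line in hpos. lra.
  - eapply Rle_lt_trans; [apply dist2_le_abs_sum |]. cbn [fst snd].
    fold (segment_line s0 t0 a).
    replace (segment_line s0 t0 a - ny n)
      with ((segment_line s0 t0 a - segment_line s0 t0 (nx n)) + (segment_line s0 t0 (nx n) - ny n))
      by ring.
    eapply Rle_lt_trans; [apply Rplus_le_compat_l, Rabs_triang |].
    rewrite (Rabs_right (segment_line s0 t0 (nx n) - ny n)) by lra.
    unfold C in hsmall. rewrite Rabs_minus_sym in hx. lra.
Qed.

End Tree.

Theorem theorem1 (s0 t0 : R) (hs0 : 1 <= s0) (ht0 : 1 <= t0) :
  forall p : R * R,
    accumulation_point (locations s0 t0) p <-> segment s0 t0 p.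
Proof.
  intros p. split.
  - apply accumulation_point_in_segment; assumption.
  - apply segment_in_accumulation_point; assumption.
Qed.
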